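(* Let $R$ be a ring and let $a\in R$ be such that for some integer $n\geq 2$ the element $a^n$ is regular, i.e., $a^n=a^nba^n$ for some $b\in R$. Then there exists an idempotent $e\in aRa$ such that $(a(1-e))^n=0$; that is, $a$ is a D-regularly nil clean element of index at most $n$.
   Context: All rings are associative with identity $1\neq 0$. An element $a\in R$ is called D-regularly nil clean of index at most $k$ if there is an idempotent $e\in aRa$ with $(a(1-e))^k=0$. *)

From HB Require Import structures.
From mathcomp Require Import all_boot all_order all_algebra.
Set Implicit Arguments. Unset Strict Implicit. Unset Printing Implicit Defensive.
Import GRing.Theory.
Local Open Scope ring_scope.

Definition regular_elt (R : nzRingType) (x : R) : Prop :=
  exists b : R, x = x * b * x.

Definition DRNC_index_le (R : nzRingType) (a : R) (k : nat) : Prop :=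
  exists e : R, (exists r : R, e = a * r * a) /\ e * e = e /\
                (a * (1 - e)) ^+ k = 0.

From HB Require Import structures.
From mathcomp Require Import all_boot all_order all_algebra.
From mathcomp Require Import zify.
Import GRing.Theory.
Local Open Scope ring_scope.

(* Take a reflexive inverse c of a^n (a^n c a^n = a^n, c a^n c = c) and
   e := a^(n-1) c a, an idempotent of aRa.  Moving a factor a^j from the
   right of 1 - a^k c a^(n-k) to its left lowers k by j, so
   (a(1-e))^n = a^n (1 - c a^n) X for some X, and a^n (1 - c a^n) = 0. *)

Lemma regular_reflexive_inverse (R : nzRingType) (x : R) :
  regular_elt x -> exists c : R, x * c * x = x /\ c * x * c = c.
Proof.
move=> [b xbx]; exists (b * x * b); split; first by rewrite !mulrA -!xbx.
have bxbx : b * x * b * x = b * x by rewrite -!mulrA [x * (b * x)]mulrA -xbx.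
by rewrite !mulrA bxbx bxbx.
Qed.

Section SplitPower.
Variables (R : nzRingType) (a c : R) (n : nat).

Definition split_pow (k : nat) : R := a ^+ k * c * a ^+ (n - k).

Lemma subr_split_pow_mul_expr (k j : nat) : (j <= k <= n)%N ->
  (1 - split_pow k) * a ^+ j = a ^+ j * (1 - split_pow (k - j)).
Proof.
move=> /andP[jk kn]; rewrite mulrBl mulrBr mul1r mulr1 /split_pow.
rewrite -!mulrA -exprD !mulrA -exprD.
by rewrite (_ : n - k + j = n - (k - j))%N ?subnKC //; lia.
Qed.

Lemma expr_mul_subr_split_pow (m : nat) : (m < n)%N ->
  exists X, (a * (1 - split_pow n.-1)) ^+ m.+1
            = a ^+ m.+1 * (1 - split_pow (n.-1 - m)) * X.
Proof.
elim: m => [|m IHm] ltmn; first by exists 1; rewrite expr1 mulr1 subn0.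
rewrite exprS.
have [X ->] := IHm (ltnW ltmn).
exists ((1 - split_pow (n.-1 - m)) * X).
rewrite !mulrA -(mulrA a) subr_split_pow_mul_expr; last by lia.
by rewrite (_ : n.-1 - m.+1 = n.-1 - m - 1)%N ?mulrA -?exprS //; lia.
Qed.

Lemma split_pow_idem (k : nat) : c * a ^+ n * c = c -> (k <= n)%N ->
  split_pow k * split_pow k = split_pow k.
Proof.
move=> cac kn; rewrite /split_pow -!mulrA (mulrA (a ^+ (n - k))) -exprD.
by rewrite subnK // !mulrA -(mulrA (a ^+ k) c) -(mulrA (a ^+ k) (c * _)) cac.
Qed.

Lemma split_pow_pred_nil : a ^+ n * c * a ^+ n = a ^+ n -> (0 < n)%N ->
  (a * (1 - split_pow n.-1)) ^+ n = 0.
Proof.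
move=> aca n_gt0; have lt_pred_n : (n.-1 < n)%N by rewrite ltn_predL.
have [X] := expr_mul_subr_split_pow _ lt_pred_n.
rewrite prednK // => ->; rewrite subnn /split_pow subn0 expr0 mul1r.
by rewrite mulrBr mulr1 mulrA aca subrr mul0r.
Qed.

Lemma split_pow_pred_corner : (2 <= n)%N ->
  split_pow n.-1 = a * (a ^+ n.-2 * c) * a.
Proof.
move=> n_ge2; rewrite /split_pow (_ : n - n.-1 = 1)%N; last by lia.
by rewrite expr1 !mulrA -exprS (_ : n.-2.+1 = n.-1) //; lia.
Qed.

End SplitPower.

Arguments split_pow {R} a c n k.

Theorem proposition2p5 (R : nzRingType) (a : R) (n : nat) :
  (2 <= n)%N -> regular_elt (a ^+ n) -> DRNC_index_le a n.
Proof.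
move=> n_ge2 /regular_reflexive_inverse[c [aca cac]].
exists (split_pow a c n n.-1); split; [|split].
- by exists (a ^+ n.-2 * c); apply: split_pow_pred_corner.
- by apply: split_pow_idem => //; lia.
- by apply: split_pow_pred_nil => //; lia.
Qed.
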